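(* For every graph $G$ and every positive integer $\alpha$, $\mathrm{tw}(G)\le 5\,\mathrm{ecrw}(G)-1$ and $\mathrm{tw}(G)\le 3\,\mathrm{ecrw}_\alpha(G)+2\alpha-1$.
   Context: A tree-cut decomposition of a graph $G$ is a pair $\mathcal{T}=(T,\{X_t\}_{t\in V(T)})$ where $T$ is a tree and the bags $X_t\subseteq V(G)$ are pairwise disjoint (possibly empty) with $\bigcup_{t\in V(T)}X_t=V(G)$. For a node $t$ of $T$, let $T_1,\dots,T_m$ be the connected components of $T-t$ and $Z_i=\bigcup_{s\in V(T_i)}X_s$; $\mathrm{cross}_{\mathcal{T}}(t)$ is the number of edges of $G$ whose two endpoints lie in two distinct sets among $Z_1,\dots,Z_m$ (if $T$ has one node, $\mathrm{cross}_{\mathcal T}(t)=0$). The crossing number of $\mathcal{T}$ is $\max_{t}\mathrm{cross}_{\mathcal{T}}(t)$, and the thickness of $\mathcal{T}$ is $\max_t|X_t|$. $\mathrm{ecrw}_\alpha(G)$ is the minimum crossing number over tree-cut decompositions of $G$ of thickness at most $\alpha$. The edge-crossing width of $\mathcal T$ is the maximum of its crossing number and its thickness, and $\mathrm{ecrw}(G)$ is the minimum edge-crossing width over all tree-cut decompositions of $G$. $\mathrm{tw}(G)$ denotes tree-width. *)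

From HB Require Import structures.
From mathcomp Require Import all_boot all_order all_algebra.
Set Implicit Arguments. Unset Strict Implicit. Unset Printing Implicit Defensive.
Import Order.TTheory GRing.Theory Num.Theory.

Definition is_tree (T : finType) (tE : rel T) : Prop :=
  [/\ symmetric tE, irreflexive tE, 0 < #|T|,
      (forall x y, connect tE x y) &
      (forall x y, tE x y ->
         ~~ connect (fun a b => tE a b && ([set a; b] != [set x; y])) x y)].

Definition avoid (T : finType) (tE : rel T) (t : T) : rel T :=
  fun a b => [&& tE a b, a != t & b != t].

(* A tree-cut decomposition (T, {X_t}) with pairwise disjoint bags covering V
   is encoded by the map f : V -> T sending a vertex to the node whose bag
   contains it; X_t = [set v | f v == t]. *)
Definition bag (T V : finType) (f : V -> T) (t : T) : {set V} := [set v | f v == t].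

(* Edges of G are the 2-sets {u,v} with e u v. cross(t) counts edges whose
   endpoints lie in two distinct components of T - t. *)
Definition cross (T : finType) (tE : rel T) (V : finType) (e : rel V)
    (f : V -> T) (t : T) : nat :=
  #|[set E : {set V} | [exists u, exists v,
       [&& e u v, E == [set u; v], f u != t, f v != t &
           ~~ connect (avoid tE t) (f u) (f v)]]]|.

Definition crossing_number (T : finType) (tE : rel T) (V : finType) (e : rel V)
    (f : V -> T) : nat := \max_(t : T) cross tE e f t.

Definition thickness (T V : finType) (f : V -> T) : nat :=
  \max_(t : T) #|bag f t|.

Definition ecrw_width (T : finType) (tE : rel T) (V : finType) (e : rel V)
    (f : V -> T) : nat := maxn (crossing_number tE e f) (thickness f).

Definition is_ecrw (V : finType) (e : rel V) (k : nat) : Prop :=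
  (exists (T : finType) (tE : rel T) (f : V -> T),
      is_tree tE /\ ecrw_width tE e f = k) /\
  (forall (T : finType) (tE : rel T) (f : V -> T),
      is_tree tE -> k <= ecrw_width tE e f).

Definition is_ecrw_alpha (V : finType) (e : rel V) (alpha k : nat) : Prop :=
  (exists (T : finType) (tE : rel T) (f : V -> T),
      [/\ is_tree tE, thickness f <= alpha & crossing_number tE e f = k]) /\
  (forall (T : finType) (tE : rel T) (f : V -> T),
      is_tree tE -> thickness f <= alpha -> k <= crossing_number tE e f).

(* Tree decompositions and tree-width (width = max bag size - 1, an integer,
   so that the empty graph has tree-width -1). *)
Definition is_tree_decomposition (T : finType) (tE : rel T) (V : finType)
    (e : rel V) (B : T -> {set V}) : Prop :=
  [/\ is_tree tE,
      (forall v, exists t, v \in B t),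
      (forall u v, e u v -> exists t, (u \in B t) && (v \in B t)) &
      (forall v s1 s2, v \in B s1 -> v \in B s2 ->
         connect (fun a b => [&& tE a b, v \in B a & v \in B b]) s1 s2)].

Definition td_width (T V : finType) (B : T -> {set V}) : int :=
  ((\max_(t : T) #|B t|)%:Z - 1)%R.

Definition is_tw (V : finType) (e : rel V) (w : int) : Prop :=
  (exists (T : finType) (tE : rel T) (B : T -> {set V}),
      is_tree_decomposition tE e B /\ td_width B = w) /\
  (forall (T : finType) (tE : rel T) (B : T -> {set V}),
      is_tree_decomposition tE e B -> (w <= td_width B)%R).

From mathcomp Require Import all_boot all_order all_algebra zify.
Import Order.TTheory GRing.Theory Num.Theory.
Set Implicit Arguments. Unset Strict Implicit. Unset Printing Implicit Defensive.

(* Root the tree of a tree-cut decomposition (T, X) at r and let p(t) be the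
   parent of t.  The sets
     B_t = X_t ∪ X_p(t) ∪ {endpoints of the edges of G crossing at t}
   form a tree decomposition on the same tree.  An edge uv is covered by the
   bag of the lower of f u, f v when these nodes are equal or adjacent, and
   otherwise by the bag of the node after f u on the path to f v, which
   separates them.  The nodes whose bag contains v form a subtree: a node t
   separating such a node s from f v is crossed by the edge that put v into
   B_s.  As a crossing edge has two endpoints, |B_t| <= 2 thickness + 2 cross,
   which even gives tw <= 4 ecrw - 1 and tw <= 2 ecrw_alpha + 2 alpha - 1. *)

Lemma connect_propagate (A : finType) (E : rel A) (P : A -> Prop) x :
  P x -> (forall y z, P y -> E y z -> P z) -> forall z, connect E x z -> P z.
Proof.
move=> Px PE z /connectP[p + ->]; elim: p x Px => //= y p IHp x Px /andP[xy].
exact: IHp (PE _ _ Px xy).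
Qed.

Lemma card_bigcup_leq (I W : finType) (P : pred I) (F : I -> {set W}) :
  #|\bigcup_(i | P i) F i| <= \sum_(i | P i) #|F i|.
Proof.
elim/big_ind2: _ => [|m A n B leAm leBn|//]; first by rewrite cards0.
by apply: leq_trans (leq_card_setU A B).1 _; rewrite leq_add.
Qed.

Section Tree.
Variables (T : finType) (tE : rel T).
Hypothesis tree : is_tree tE.

Lemma tree_sym : symmetric tE. Proof. by case: tree. Qed.
Lemma tree_irr : irreflexive tE. Proof. by case: tree. Qed.
Lemma tree_connect x y : connect tE x y. Proof. by case: tree. Qed.
Lemma tree_bridge x y : tE x y ->
  ~~ connect (fun a b => tE a b && ([set a; b] != [set x; y])) x y.
Proof. by case: tree => _ _ _ _; apply. Qed.

(* Junk value: [separates t t b] holds for every [b != t]. *)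
Definition separates t a b := ~~ connect (avoid tE t) a b.

Lemma avoid_sym t : symmetric (avoid tE t).
Proof. by move=> a b; rewrite /avoid tree_sym [(a != t) && _]andbC. Qed.

Lemma connect_avoidC t a b :
  connect (avoid tE t) a b = connect (avoid tE t) b a.
Proof. exact: (sym_connect_sym (avoid_sym t)). Qed.

Lemma separatesC t a b : separates t a b = separates t b a.
Proof. by rewrite /separates connect_avoidC. Qed.

Lemma separatesxx t a : separates t a a = false.
Proof. by rewrite /separates connect0. Qed.

Lemma connect_avoid_edge t c a b : connect (avoid tE t) a b ->
  connect (fun x y => tE x y && ([set x; y] != [set t; c])) a b.
Proof.
apply: connect_sub => x y /and3P[xy xt yt]; apply: connect1; rewrite xy /=.
apply: contraNneq xt => xyE; have : t \in [set x; y] by rewrite xyE set21.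
by rewrite !inE => /orP[] /eqP tx; [rewrite tx | move: yt; rewrite tx eqxx].
Qed.

Lemma step_toward a x : a != x -> exists2 b, tE a b & connect (avoid tE a) b x.
Proof.
move=> ax; pose P z := z = a \/ exists2 b, tE a b & connect (avoid tE a) b z.
suff : P x by case=> // xa; rewrite xa eqxx in ax.
apply: (@connect_propagate _ _ P a (or_introl erefl)) (tree_connect a x) => y z Py yz.
have [->|za] := eqVneq z a; first by left.
have [ya|ya] := eqVneq y a; first by right; exists z; rewrite -?ya ?connect0.
case: Py => [/eqP|[b ab by_]]; first by rewrite (negbTE ya).
right; exists b => //; apply: connect_trans by_ (connect1 _).
by rewrite /avoid yz ya za.
Qed.

Lemma step_toward_unique a b b' x : tE a b -> connect (avoid tE a) b x ->
  tE a b' -> connect (avoid tE a) b' x -> b = b'.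
Proof.
move=> ab bx ab' b'x; apply/eqP/negPn/negP => bb'.
move/negP: (tree_bridge ab); apply; apply: (@connect_trans _ _ b').
  apply: connect1; rewrite ab' /=; apply/negP => /eqP abE.
  have : b' \in [set a; b] by rewrite -abE set22.
  by rewrite !inE => /orP[] /eqP b'E; [rewrite b'E tree_irr in ab' | rewrite b'E eqxx in bb'].
by apply: (@connect_avoid_edge a b); rewrite connect_avoidC in bx; apply: connect_trans b'x bx.
Qed.

Lemma step_toward_separates a b x : tE a b -> connect (avoid tE a) b x ->
  b != x -> separates b a x.
Proof.
move=> ab bx bNx; apply/negP => ax; move/negP: (tree_bridge ab); apply.
apply: (@connect_trans _ _ x).
  apply: connect_sub (@connect_avoid_edge b a _ _ ax) => u w /andP[uw uwE].
  by apply: connect1; rewrite uw (setUC [set a]).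
by apply: (@connect_avoid_edge a b); rewrite connect_avoidC.
Qed.

Lemma separates_step a b x t : tE a b -> connect (avoid tE a) b x ->
  t != b -> t != x -> separates t b x -> (t != a) && separates t a x.
Proof.
move=> ab bx tb tx tbx.
have ta : t != a by apply: contraNneq tbx => ->; rewrite /separates bx.
rewrite ta; apply: contra tbx => ax; apply: connect_trans (connect1 _) ax.
by rewrite /avoid tree_sym ab eq_sym tb eq_sym ta.
Qed.

Definition separators x s := [set t | [&& t != s, t != x & separates t s x]].

(* Induction on [#|separators x s|], which drops strictly when [s] steps toward [x]. *)
Lemma separator_closed_connect (D : pred T) x : D x ->
  (forall s t, D s -> t \in separators x s -> D t) ->
  forall s, D s -> connect (fun a b => [&& tE a b, D a & D b]) s x.
Proof.
move=> Dx Dclosed s; have [n] := ubnP #|separators x s|.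
elim: n s => // n IHn s ltsn Ds.
have [->|sx] := eqVneq s x; first exact: connect0.
have [b sb bx] := step_toward sx.
have [bx'|bNx] := eqVneq b x; first by rewrite bx' in sb; apply: connect1; rewrite sb Ds Dx.
have bsep : b \in separators x s.
  rewrite inE bNx (step_toward_separates sb bx bNx) !andbT.
  by apply/eqP => bs; rewrite bs tree_irr in sb.
have Db := Dclosed _ _ Ds bsep.
apply: (@connect_trans _ _ b); first by apply: connect1; rewrite sb Ds Db.
apply: IHn Db; apply: leq_trans (proper_card _) ltsn; apply/properP; split.
  apply/subsetP => t; rewrite !inE => /and3P[tb tx tbx].
  by rewrite tx (separates_step sb bx tb tx tbx).
by exists b; rewrite // inE eqxx.
Qed.

Definition parent r a : T :=
  if [pick b | tE a b && connect (avoid tE a) b r] is Some b then b else a.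

Lemma parent_edge r a : parent r a != a -> tE a (parent r a).
Proof. by rewrite /parent; case: pickP => [b /andP[]|_] //; rewrite eqxx. Qed.

Lemma parent_eq r a b : tE a b -> connect (avoid tE a) b r -> parent r a = b.
Proof.
move=> ab br; rewrite /parent; case: pickP => [b' /andP[ab' b'r]|noB].
  exact: step_toward_unique ab' b'r ab br.
by move: (noB b); rewrite ab br.
Qed.

Lemma connect_avoid_separates t s a y : separates t s a ->
  connect (avoid tE t) a y -> connect (avoid tE s) a y.
Proof.
move=> tsa ay; pose P z := connect (avoid tE t) a z && connect (avoid tE s) a z.
suff /andP[] : P y by [].
apply: (@connect_propagate _ _ P a) ay; first by rewrite /P !connect0.
move=> u w /andP[au as_] /and3P[uw ut wt].
have aw : connect (avoid tE t) a w.
  by apply: connect_trans au (connect1 _); rewrite /avoid uw ut wt.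
rewrite /P aw; apply: connect_trans as_ (connect1 _); rewrite /avoid uw /=.
by apply/andP; split; apply/eqP => xs; move: tsa; rewrite /separates connect_avoidC -xs ?au ?aw.
Qed.

Lemma edge_parent r a b : tE a b -> parent r a = b \/ parent r b = a.
Proof.
move=> ab; have ba : tE b a by rewrite tree_sym.
have [<-|aNr] := eqVneq a r; first by right; apply: parent_eq ba (connect0 _ _).
have [c ac cr] := step_toward aNr.
have [cb|cNb] := eqVneq c b; first by left; rewrite -cb; apply: parent_eq ac cr.
right; apply: parent_eq ba _.
have abc : separates a b c.
  apply: contraNN cNb => bc; apply/eqP.
  exact: step_toward_unique ac cr ab (connect_trans bc cr).
apply: connect_trans (connect1 _) (connect_avoid_separates abc cr).
rewrite /avoid ac cNb /= andbT; apply/eqP => eab.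
by rewrite eab tree_irr in ab.
Qed.
End Tree.

Section TreeCutToTreeDecomposition.
Variables (T : finType) (tE : rel T) (V : finType) (e : rel V) (f : V -> T) (r : T).
Hypotheses (tree : is_tree tE) (e_sym : symmetric e).

Definition crossing_ends t : {set V} :=
  [set u | [exists z, [&& e u z, f u != t, f z != t & separates tE t (f u) (f z)]]].

Definition td_bag t : {set V} :=
  bag f t :|: bag f (parent tE r t) :|: crossing_ends t.

Lemma td_bag_cover v : v \in td_bag (f v).
Proof. by rewrite !inE eqxx. Qed.

Lemma td_bag_edge u v : e u v -> exists t, (u \in td_bag t) && (v \in td_bag t).
Proof.
move=> uv; have [fuv|fuNv] := eqVneq (f u) (f v).
  by exists (f u); rewrite !inE fuv eqxx.
have [fufv|fuNfv] := boolP (tE (f u) (f v)).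
  have [pu|pv] := edge_parent tree r fufv.
    by exists (f u); rewrite !inE pu !eqxx !orbT.
  by exists (f v); rewrite !inE pv !eqxx !orbT.
have [b ub bv] := step_toward tree fuNv.
have bNv : b != f v by apply: contraNneq fuNfv => <-.
have uNb : f u != b by apply: contraTneq ub => <-; rewrite (tree_irr tree).
have sep := step_toward_separates tree ub bv bNv.
exists b; rewrite !inE; apply/andP; split; apply/orP; right; apply/existsP.
  by exists v; rewrite uv uNb eq_sym bNv sep.
by exists u; rewrite e_sym uv uNb eq_sym bNv (separatesC tree) sep.
Qed.

Lemma td_bag_separator v s t :
  v \in td_bag s -> t \in separators tE (f v) s -> v \in td_bag t.
Proof.
move=> + /[!inE] /and3P[tNs tNv tsv]; rewrite !inE.
case/orP => [/orP[/eqP vs|/eqP vp]|/existsP[z /and4P[vz vNs zNs svz]]].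
- by rewrite vs separatesxx in tsv.
- have [sv|sNv] := eqVneq s (f v); first by rewrite sv separatesxx in tsv.
  have sfv : tE s (f v) by rewrite vp; apply: parent_edge; rewrite -vp eq_sym.
  move: tsv; rewrite /separates (@connect1 _ _ s (f v)) //.
  by rewrite /avoid sfv eq_sym tNs eq_sym tNv.
have stay y : connect (avoid tE t) (f v) y -> connect (avoid tE s) (f v) y.
  exact: (connect_avoid_separates tree tsv).
apply/orP; right; apply/existsP; exists z; rewrite vz eq_sym tNv /=; apply/andP; split.
  apply/eqP => zt; move: svz; rewrite zt /separates; apply/negP/negPn.
  have [t' tt' t'v] := step_toward tree tNv.
  have t'Ns : t' != s by apply: contraNneq tsv => t's; rewrite -t's /separates t'v.
  rewrite (connect_avoidC tree) in t'v.
  apply: connect_trans (stay _ t'v) (connect1 _).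
  by rewrite /avoid (tree_sym tree) tt' t'Ns tNs.
by apply: contraNN svz => /stay; rewrite /separates => ->.
Qed.

Lemma td_bag_connect v s1 s2 : v \in td_bag s1 -> v \in td_bag s2 ->
  connect (fun a b => [&& tE a b, v \in td_bag a & v \in td_bag b]) s1 s2.
Proof.
move=> vs1 vs2.
have toward := separator_closed_connect tree (td_bag_cover v) (@td_bag_separator v).
have Rsym : symmetric (fun a b => [&& tE a b, v \in td_bag a & v \in td_bag b]).
  by move=> a b; rewrite (tree_sym tree) (andbC (v \in td_bag a)).
by apply: connect_trans (toward _ vs1) _; rewrite (sym_connect_sym Rsym) toward.
Qed.

Lemma card_crossing_ends t : #|crossing_ends t| <= 2 * cross tE e f t.
Proof.
rewrite /cross; set S := [set E : {set V} | _].
have sub : crossing_ends t \subset \bigcup_(E in S) E.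
  apply/subsetP => u; rewrite inE => /existsP[z /and4P[uz ut zt sz]].
  apply/bigcupP; exists [set u; z]; last exact: set21.
  by rewrite inE; apply/existsP; exists u; apply/existsP; exists z; rewrite uz eqxx ut zt.
apply: leq_trans (subset_leq_card sub) _; apply: leq_trans (card_bigcup_leq _ _) _.
rewrite mulnC -sum_nat_const; apply: leq_sum => E.
by rewrite inE => /existsP[u /existsP[z /and5P[_ /eqP -> _ _ _]]]; rewrite cards2; case: (u != z).
Qed.

Lemma card_td_bag t :
  #|td_bag t| <= #|bag f t| + #|bag f (parent tE r t)| + 2 * cross tE e f t.
Proof.
apply: leq_trans (leq_card_setU _ _).1 _.
by rewrite leq_add ?card_crossing_ends ?(leq_card_setU _ _).1.
Qed.
End TreeCutToTreeDecomposition.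

Lemma tree_decomposition_of_tree_cut (T : finType) (tE : rel T) (V : finType)
    (e : rel V) (f : V -> T) :
  is_tree tE -> symmetric e -> exists B : T -> {set V},
    is_tree_decomposition tE e B /\
    \max_(t : T) #|B t| <= 2 * thickness f + 2 * crossing_number tE e f.
Proof.
move=> tree e_sym; have [r _] : exists r : T, r \in T by apply/card_gt0P; case: tree.
exists (td_bag tE e f r); split.
  split=> // [v|u v|v s1 s2]; first by exists (f v); apply: td_bag_cover.
    exact: td_bag_edge.
  exact: td_bag_connect.
apply/bigmax_leqP => t _; apply: leq_trans (card_td_bag tE e f r t) _.
have bag_le s : #|bag f s| <= thickness f by apply: (leq_bigmax (F := fun s => #|bag f s|)).
have := leq_bigmax (F := cross tE e f) t; rewrite -/(crossing_number tE e f).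
have := bag_le t; have := bag_le (parent tE r t); lia.
Qed.

Lemma tw_le_tree_cut (V : finType) (e : rel V) (w : int) (T : finType) (tE : rel T)
    (f : V -> T) : symmetric e -> is_tw e w -> is_tree tE ->
  (w <= (2 * thickness f + 2 * crossing_number tE e f)%N%:Z - 1)%R.
Proof.
move=> e_sym [_ tw_min] tree.
have [B [tdB widthB]] := tree_decomposition_of_tree_cut f tree e_sym.
by apply: le_trans (tw_min _ _ _ tdB) _; rewrite lerD2r lez_nat.
Qed.

Theorem lemma3p1 (V : finType) (e : rel V) (He : symmetric e) (Hi : irreflexive e) :
  (forall (k : nat) (w : int), is_ecrw e k -> is_tw e w ->
      (w <= 5%:Z * k%:Z - 1)%R) /\
  (forall (alpha : nat), 0 < alpha ->
    forall (k : nat) (w : int), is_ecrw_alpha e alpha k -> is_tw e w ->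
      (w <= 3%:Z * k%:Z + 2%:Z * alpha%:Z - 1)%R).
Proof.
split=> [k w [[T [tE [f [tree <-]]]] _] tw|alpha _ k w [[T [tE [f [tree thick <-]]]] _] tw].
  apply: le_trans (tw_le_tree_cut f He tw tree) _; rewrite -PoszM lerD2r lez_nat.
  by rewrite /ecrw_width; lia.
apply: le_trans (tw_le_tree_cut f He tw tree) _; rewrite -!PoszM -PoszD lerD2r lez_nat.
lia.
Qed.
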